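(* There is an absolute constant $C>0$ such that for all sufficiently large positive integers $n\le m$ the following holds. For every fixed $\mathbf{y}\in\mathbb{C}^m$, if $\mathbf{x}\sim CN(0,\mathbf{I}_{m\times m}/m)$, then with probability at least $1-m\exp(-n/6)$, \[ \frac1m\|\mathrm{phase}(\mathbf{x}+\mathbf{y})-\mathrm{phase}(\mathbf{x})\|_1\le C\log m\,\max\Big(\|\mathbf{y}\|,\frac nm\Big). \]
   Context: For $z\in\mathbb{C}\setminus\{0\}$, $\mathrm{phase}(z)=z/|z|$, and for a vector $\mathrm{phase}$ acts entrywise. $\|\cdot\|_1$ is the sum of moduli of entries and $\|\cdot\|$ the Euclidean norm. $CN(0,\Sigma)$ is the complex normal distribution with real and imaginary parts independent $N(0,\Sigma/2)$. *)

From HB Require Import structures.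
From mathcomp Require Import all_boot all_order all_algebra.
From mathcomp Require Import all_classical all_reals all_analysis.
Set Implicit Arguments. Unset Strict Implicit. Unset Printing Implicit Defensive.
Import Order.TTheory GRing.Theory Num.Theory.
Local Open Scope classical_set_scope.
Local Open Scope ring_scope.

(* Complex numbers are represented as pairs (real part, imaginary part). *)

Definition cmod {R : realType} (z : R * R) : R := Num.sqrt (z.1 ^+ 2 + z.2 ^+ 2).

(* phase z = z/|z|  (convention: phase 0 = 0, an event of probability zero) *)
Definition cphase {R : realType} (z : R * R) : R * R :=
  (z.1 / cmod z, z.2 / cmod z).

Definition czadd {R : realType} (z w : R * R) : R * R := (z.1 + w.1, z.2 + w.2).
Definition czsub {R : realType} (z w : R * R) : R * R := (z.1 - w.1, z.2 - w.2).

Definition cnorm1 {R : realType} (m : nat) (v : 'I_m -> R * R) : R :=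
  \sum_(i < m) cmod (v i).

Definition cnorm2 {R : realType} (m : nat) (v : 'I_m -> R * R) : R :=
  Num.sqrt (\sum_(i < m) ((v i).1 ^+ 2 + (v i).2 ^+ 2)).

(* Mutual independence of a finite family of real random variables:
   the product rule for every family of Borel sets (taking B i = setT
   covers every subfamily). *)
Definition mutually_independent {R : realType} (d : measure_display)
  (T : measurableType d) (P : probability T R) (I : finType) (X : I -> T -> R) :=
  forall B : I -> set R, (forall i, measurable (B i)) ->
    P (\bigcap_(i in [set: I]) (X i @^-1` B i)) =
    (\prod_(i : I) P (X i @^-1` B i))%E.

(* x ~ CN(0, I_m / m): the 2m real coordinates (true = real part,
   false = imaginary part) are mutually independent N(0, 1/(2m)). *)
Definition is_CN_scaled {R : realType} (d : measure_display)
  (T : measurableType d) (P : probability T R) (m : nat)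
  (X : bool * 'I_m -> T -> R) :=
  (forall k, measurable_fun [set: T] (X k)) /\
  mutually_independent P X /\
  (forall k (A : set R), measurable A ->
     P (X k @^-1` A) = normal_prob 0 (Num.sqrt (1 / (2 * m%:R))) A).

Definition cvec {R : realType} (T : Type) (m : nat) (X : bool * 'I_m -> T -> R)
  (w : T) : 'I_m -> R * R := fun i => (X (true, i) w, X (false, i) w).

From HB Require Import structures.
From mathcomp Require Import all_boot all_order all_algebra.
From mathcomp Require Import all_classical all_reals all_analysis.
From mathcomp Require Import ring lra measurable_realfun.
Import Order.TTheory GRing.Theory Num.Theory.
Local Open Scope classical_set_scope.
Local Open Scope ring_scope.

(* Pointwise, |phase (a + b) - phase a| <= min (2, 2|b|/|a|) <= t |b|^2 + 1/(t |a|^2)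
   for every t > 0 (AM-GM).  Call x well spread when, for every j >= n, fewer than j
   of the |x_i|^2 lie below c j / m^2.  Then a coordinate whose |x_i|^2 has rank r_i
   contributes at most 2 if r_i < n, and at most t |y_i|^2 + m^2 / (c t r_i) otherwise;
   the ranks give a harmonic sum <= 1 + ln m, and t = m / max (||y||, n/m) yields the
   bound with C = 3 + 2/c.
   Each real coordinate has density at most sqrt (m/pi), so a fixed set of j
   coordinates is simultaneously below c j / m^2 with probability at most
   (4 c j / (pi m))^j.  A union bound over the C(m, j) <= m^j / j! such sets, with
   j^j / j! <= e^j, gives e^-j once 2c <= e^-2; summing over n <= j <= m, x fails to
   be well spread with probability at most m e^-n. *)

Section ComplexPairs.
Context {R : realType}.
Implicit Types (a b z : R * R) (k t : R).

Lemma cmod_ge0 z : 0 <= cmod z.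
Proof. exact: sqrtr_ge0. Qed.

Lemma sqr_cmod z : cmod z ^+ 2 = z.1 ^+ 2 + z.2 ^+ 2.
Proof. by rewrite sqr_sqrtr // addr_ge0 ?sqr_ge0. Qed.

Lemma cmodZ k z : cmod (k * z.1, k * z.2) = `|k| * cmod z.
Proof. by rewrite /cmod /= !exprMn -mulrDr sqrtrM ?sqr_ge0 // sqrtr_sqr. Qed.

Lemma cmodN z : cmod (- z.1, - z.2) = cmod z.
Proof. by rewrite /cmod /= !sqrrN. Qed.

Lemma cmodD_le a b : cmod (czadd a b) <= cmod a + cmod b.
Proof.
have a_ge0 := cmod_ge0 a; have b_ge0 := cmod_ge0 b.
rewrite -[leRHS]ger0_norm ?addr_ge0 // -sqrtr_sqr ler_sqrt ?sqr_ge0 //.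
have cauchy_schwarz : a.1 * b.1 + a.2 * b.2 <= cmod a * cmod b.
  rewrite (le_trans (ler_norm _)) // -sqrtr_sqr -sqrtrM ?addr_ge0 ?sqr_ge0 //.
  rewrite ler_sqrt ?mulr_ge0 ?addr_ge0 ?sqr_ge0 //.
  have : 0 <= (a.1 * b.2 - a.2 * b.1) ^+ 2 by exact: sqr_ge0.
  lra.
have := sqr_cmod a; have := sqr_cmod b; rewrite /czadd /=; nra.
Qed.

Lemma cmod_cphase z : cmod z != 0 -> cmod (cphase z) = 1.
Proof.
move=> z_neq0; rewrite /cphase !(mulrC z.1) !(mulrC z.2) cmodZ.
by rewrite ger0_norm ?invr_ge0 ?cmod_ge0 // mulVf.
Qed.

Lemma cmod_cphase_le1 z : cmod (cphase z) <= 1.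
Proof.
have [z0|/cmod_cphase -> //] := eqVneq (cmod z) 0.
by rewrite /cphase z0 invr0 !mulr0 /cmod /= expr0n /= addr0 sqrtr0.
Qed.

Definition phase_gap a b : R := cmod (czsub (cphase (czadd a b)) (cphase a)).

Lemma phase_gap_le2 a b : phase_gap a b <= 2.
Proof.
rewrite (le_trans (cmodD_le _ (- (cphase a).1, - (cphase a).2))) // cmodN.
by rewrite lerD ?cmod_cphase_le1.
Qed.

Lemma phase_gap_le a b : 0 < cmod a -> cmod a * phase_gap a b <= 2 * cmod b.
Proof.
move=> a_gt0; set u := czadd a b.
have a_le : cmod a <= cmod u + cmod b.
  by have := cmodD_le u (- b.1, - b.2); rewrite cmodN /u /czadd /= !addrK.
have u_le : cmod u <= cmod a + cmod b by exact: cmodD_le.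
have [u0|u_neq0] := eqVneq (cmod u) 0.
  have phase_u : cphase u = (0, 0) by rewrite /cphase u0 invr0 !mulr0.
  rewrite /phase_gap -/u phase_u.
  have -> : czsub (0, 0) (cphase a) = (- (cphase a).1, - (cphase a).2).
    by rewrite /czsub /= !sub0r.
  rewrite cmodN cmod_cphase ?gt_eqF //.
  by have := cmod_ge0 b; lra.
have u_gt0 : 0 < cmod u by rewrite lt_def u_neq0 cmod_ge0.
(* |a| (phase u - phase a) = ((|a| - |u|) / |u|) u + b, as b = u - a *)
set s := (cmod a - cmod u) / cmod u.
have -> : cmod a * phase_gap a b = cmod (czadd (s * u.1, s * u.2) b).
  rewrite /phase_gap -[cmod a in LHS]ger0_norm ?cmod_ge0 // -cmodZ -/u.
  congr cmod; rewrite /czadd /czsub /cphase /s /=.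
  have [-> ->] : b.1 = u.1 - a.1 /\ b.2 = u.2 - a.2.
    by split; rewrite addrAC subrr add0r.
  by congr (_, _); field; rewrite !gt_eqF.
rewrite (le_trans (cmodD_le _ _)) // cmodZ normrM.
rewrite [`|(cmod u)^-1|]gtr0_norm ?invr_gt0 // mulfVK ?gt_eqF //.
have : `|cmod a - cmod u| <= cmod b by rewrite ler_norml; apply/andP; split; lra.
by have := cmod_ge0 b; lra.
Qed.

Lemma phase_gap_le_AMGM t a b : 0 < t -> 0 < cmod a ->
  phase_gap a b <= t * cmod b ^+ 2 + (t * cmod a ^+ 2)^-1.
Proof.
move=> t_gt0 a_gt0.
have gap_le : phase_gap a b <= 2 * cmod b / cmod a.
  by rewrite ler_pdivlMr // mulrC phase_gap_le.
apply: (le_trans gap_le); rewrite -subr_ge0.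
have -> : t * cmod b ^+ 2 + (t * cmod a ^+ 2)^-1 - 2 * cmod b / cmod a =
          (t * cmod a ^+ 2)^-1 * (t * cmod b * cmod a - 1) ^+ 2.
  by field; rewrite !gt_eqF.
by rewrite mulr_ge0 ?sqr_ge0 // invr_ge0 mulr_ge0 ?sqr_ge0 ?ltW.
Qed.

Lemma cnorm2_sqr m (y : 'I_m -> R * R) :
  cnorm2 y ^+ 2 = \sum_(i < m) cmod (y i) ^+ 2.
Proof.
rewrite sqr_sqrtr; last by rewrite sumr_ge0 // => i _; rewrite addr_ge0 ?sqr_ge0.
by apply: eq_bigr => i _; rewrite sqr_cmod.
Qed.

End ComplexPairs.

Section Ranks.
Context {R : realType} {m : nat}.
Implicit Types (a : 'I_m -> R) (i : 'I_m) (j : nat).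

Definition rank_of a i : nat := #|[set k | a k <= a i]%SET|.

Lemma rank_of_le a i : (rank_of a i <= m)%N.
Proof. by rewrite (leq_trans (max_card _)) ?card_ord. Qed.

Lemma card_rank_of_le a j : (#|[set i | rank_of a i <= j]%SET| <= j)%N.
Proof.
set A := [set i | _]%SET.
have [->|[i0 i0A]] := set_0Vmem A; first by rewrite cards0.
case: (arg_maxnP (rank_of a) i0A) => i1 i1A max_i1.
have i1_le : (rank_of a i1 <= j)%N by have := i1A : i1 \in A; rewrite inE.
apply: leq_trans i1_le; apply: subset_leq_card; apply/fintype.subsetP => k kA.
rewrite inE leNgt; apply/negP => a_lt.
have : (rank_of a i1 < rank_of a k)%N.
  apply: proper_card; apply/properP; split.
    by apply/fintype.subsetP => l; rewrite !inE => /le_trans; apply; exact: ltW.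
  by exists k; rewrite !inE // -ltNge.
by rewrite ltnNge => /negP; apply; exact: max_i1.
Qed.

Lemma rank_of_lower_bound a (n : nat) (u : nat -> R) :
  (forall j, (n <= j <= m)%N -> (#|[set i | (a i < u j)%R]%SET| < j)%N) ->
  forall i, (n <= rank_of a i)%N -> u (rank_of a i) <= a i.
Proof.
move=> few_below i n_le; rewrite leNgt; apply/negP => a_lt.
have := few_below _ (introT andP (conj n_le (rank_of_le a i))).
rewrite ltnNge => /negP; apply; apply: subset_leq_card; apply/fintype.subsetP => k.
by rewrite !inE => /le_lt_trans; apply.
Qed.

Lemma sum_inv_le_harmonic (f : 'I_m -> nat) :
  (forall j, (#|[set i | f i <= j]%SET| <= j)%N) ->
  forall A : {set 'I_m},
  \sum_(i in A) ((f i)%:R : R)^-1 <= \sum_(k < #|A|) (k.+1%:R : R)^-1.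
Proof.
move=> few_le A; move Ak : #|A| => k; elim: k A Ak => [|k IH] A Ak.
  by move/eqP: Ak; rewrite cards_eq0 => /eqP ->; rewrite big_set0 big_ord0.
have [i0 i0A] : exists i, i \in A by apply/set0Pn; rewrite -card_gt0 Ak.
case: (arg_maxnP f i0A) => i1 i1A max_i1; have {}i1A : i1 \in A := i1A.
have k_lt : (k < f i1)%N.
  rewrite -Ak (leq_trans _ (few_le (f i1))) // subset_leq_card //.
  by apply/fintype.subsetP => i iA; rewrite inE; exact: max_i1.
rewrite (bigD1 i1) //= big_ord_recr /= addrC lerD //.
  have Ak' : #|A :\ i1| = k by move: Ak; rewrite (cardsD1 i1) i1A => -[].
  rewrite (eq_bigl (mem (A :\ i1))) ?IH // => i.
  by rewrite !inE andbC.
by rewrite lef_pV2 ?posrE ?ltr0n ?(leq_trans _ k_lt) // ler_nat.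
Qed.

End Ranks.

Lemma harmonic_le_1Dln {R : realType} n :
  \sum_(k < n.+1) (k.+1%:R : R)^-1 <= 1 + ln n.+1%:R.
Proof.
elim: n => [|n IH]; first by rewrite big_ord1 ln1 invr1 addr0.
rewrite big_ord_recr /= (le_trans (lerD IH (lexx _))) // -addrA lerD2l.
have := @le_ln1Dx R (- (n.+2%:R)^-1).
rewrite ltrN2 invf_lt1 ?ltr0n ?ltr1n // => /(_ isT).
have -> : 1 - (n.+2%:R : R)^-1 = n.+1%:R / n.+2%:R.
  by field; rewrite -natrD pnatr_eq0.
rewrite lnM ?lnV ?posrE ?invr_gt0 ?ltr0n //.
by move: (ln _) (ln _) ((n.+2)%:R^-1) => p q x; lra.
Qed.

Lemma sum_inv_rank_of_le {R : realType} {m : nat} (a : 'I_m -> R) : (0 < m)%N ->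
  \sum_(i < m) ((rank_of a i)%:R : R)^-1 <= 1 + ln m%:R.
Proof.
move=> m_gt0; have := @sum_inv_le_harmonic R m _ (card_rank_of_le a) [set: 'I_m]%SET.
rewrite cardsT card_ord (eq_bigl xpredT) => [/le_trans|i]; last by rewrite inE.
by apply; rewrite -(prednK m_gt0) harmonic_le_1Dln.
Qed.

Definition well_spread {R : realType} {m : nat} (n : nat) (c : R)
    (x : 'I_m -> R * R) : Prop :=
  forall j, (n <= j <= m)%N ->
    (#|[set i | (cmod (x i) ^+ 2 < c * j%:R / m%:R ^+ 2)%R]%SET| < j)%N.

Section WellSpreadBound.
Context {R : realType} {m n : nat} {c : R} {x : 'I_m -> R * R} (y : 'I_m -> R * R).
Hypotheses (c_gt0 : 0 < c) (n_gt0 : (0 < n)%N) (n_le_m : (n <= m)%N).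
Hypothesis x_spread : well_spread n c x.

Let rk i := rank_of (fun k => cmod (x k) ^+ 2) i.

Lemma phase_gap_le_rank t i : 0 < t ->
  phase_gap (x i) (y i) <= (if (rk i < n)%N then 2 else 0) +
    t * cmod (y i) ^+ 2 + m%:R ^+ 2 / (c * t) / (rk i)%:R.
Proof.
move=> t_gt0; have m_gt0 : (0 : R) < m%:R by rewrite ltr0n (leq_trans n_gt0).
have ty_ge0 : 0 <= t * cmod (y i) ^+ 2 by rewrite mulr_ge0 ?sqr_ge0 ?ltW.
case: ltnP => [_|n_le_rk].
  rewrite -addrA (le_trans (phase_gap_le2 _ _)) // lerDl addr_ge0 //.
  by rewrite !mulr_ge0 ?invr_ge0 ?mulr_ge0 ?sqr_ge0 ?ler0n ?ltW.
have rk_gt0 : (0 : R) < (rk i)%:R by rewrite ltr0n (leq_trans n_gt0).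
have lb_gt0 : 0 < c * (rk i)%:R / m%:R ^+ 2 by rewrite divr_gt0 ?mulr_gt0 ?exprn_gt0.
have x_lb : c * (rk i)%:R / m%:R ^+ 2 <= cmod (x i) ^+ 2.
  exact: (rank_of_lower_bound _ _ (fun j => c * j%:R / m%:R ^+ 2) x_spread).
have x_gt0 : 0 < cmod (x i).
  by rewrite lt_def cmod_ge0 andbT -sqrf_eq0 gt_eqF // (lt_le_trans lb_gt0 x_lb).
rewrite add0r (le_trans (phase_gap_le_AMGM _ _ (y i) t_gt0 x_gt0)) // lerD2l.
have -> : m%:R ^+ 2 / (c * t) / (rk i)%:R = (t * (c * (rk i)%:R / m%:R ^+ 2))^-1.
  by field; rewrite !gt_eqF.
by rewrite lef_pV2 ?posrE ?(mulr_gt0 t_gt0) ?exprn_gt0 // ler_pM2l.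
Qed.

Lemma well_spread_phase_gap_le :
  m%:R^-1 * \sum_(i < m) phase_gap (x i) (y i) <=
    (3 + (1 + ln m%:R) / c) * Num.max (cnorm2 y) (n%:R / m%:R).
Proof.
have m_gt0 : (0 < m)%N := leq_trans n_gt0 n_le_m.
have mR_gt0 : (0 : R) < m%:R by rewrite ltr0n.
set mu := Num.max _ _.
have nm_le : n%:R / m%:R <= mu by rewrite le_max lexx orbT.
have y_le : cnorm2 y <= mu by rewrite le_max lexx.
have mu_gt0 : 0 < mu by rewrite (lt_le_trans _ nm_le) // divr_gt0 ?ltr0n.
set t := m%:R / mu; have t_gt0 : 0 < t by rewrite divr_gt0.
rewrite (le_trans (ler_wpM2l _ (ler_sum _ (fun i _ => phase_gap_le_rank _ i t_gt0)))) //.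
rewrite !big_split /= -!mulr_sumr !mulrDr.
have small_ranks : m%:R^-1 * \sum_(i < m) (if (rk i < n)%N then 2 else 0) <= 2 * mu.
  rewrite -big_mkcond /= sumr_const -[2 *+ _]mulr_natr mulrCA ler_pM2l // mulrC.
  rewrite (le_trans _ nm_le) // ler_wpM2r ?invr_ge0 ?ler0n // ler_nat.
  apply: (leq_trans _ (card_rank_of_le _ n)); apply: subset_leq_card.
  by apply/fintype.subsetP => i; rewrite !inE; exact: ltnW.
have y_part : m%:R^-1 * (t * \sum_(i < m) cmod (y i) ^+ 2) <= mu.
  have -> : m%:R^-1 * (t * \sum_(i < m) cmod (y i) ^+ 2) =
            (\sum_(i < m) cmod (y i) ^+ 2) / mu by rewrite /t; field; rewrite !gt_eqF.
  rewrite -cnorm2_sqr ler_pdivrMr // -expr2.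
  by apply: lerXn2r; rewrite // nnegrE ?sqrtr_ge0 // ltW.
have rank_part : m%:R^-1 * (m%:R ^+ 2 / (c * t) * \sum_(i < m) ((rk i)%:R)^-1) <=
                 (1 + ln m%:R) / c * mu.
  have -> : m%:R^-1 * (m%:R ^+ 2 / (c * t) * \sum_(i < m) ((rk i)%:R)^-1) =
            (\sum_(i < m) ((rk i)%:R)^-1) / c * mu by rewrite /t; field; rewrite !gt_eqF.
  apply: ler_wpM2r; first exact: ltW.
  by apply: ler_wpM2r; [rewrite invr_ge0 ltW | exact: sum_inv_rank_of_le].
lra.
Qed.

End WellSpreadBound.

Lemma measurable_inv {R : realType} : measurable_fun [set: R] (@GRing.inv R).
Proof.
rewrite -(setvU [set 0]); have m0 : measurable [set (0 : R)] := measurable_set1 0.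
apply/(measurable_funU _ (measurableC m0) m0); split; last exact: measurable_fun_set1.
apply: open_continuous_measurable_fun.
  apply: closed_openC; apply: accessible_closed_set1; apply: hausdorff_accessible.
  exact: Rhausdorff.
by move=> x /set_mem /= x0; apply/inv_continuous/eqP.
Qed.

Lemma measurable_sqrt {R : realType} : measurable_fun [set: R] (@Num.sqrt R).
Proof. by apply: continuous_measurable_fun; exact: sqrt_continuous. Qed.

Section MeasurablePhaseGap.
Context {d : measure_display} {T : measurableType d} {R : realType}.
Context {f g : T -> R}.
Hypotheses (mf : measurable_fun [set: T] f) (mg : measurable_fun [set: T] g).

Lemma measurable_cmod_pair : measurable_fun [set: T] (fun w => cmod (f w, g w)).
Proof.
by apply: measurableT_comp measurable_sqrt _; apply: measurable_funD;
  exact: measurable_funX.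
Qed.

Lemma measurable_cphase_pair :
  measurable_fun [set: T] (fun w => (cphase (f w, g w)).1) /\
  measurable_fun [set: T] (fun w => (cphase (f w, g w)).2).
Proof.
have minv := measurableT_comp measurable_inv measurable_cmod_pair.
by split; apply: measurable_funM.
Qed.

End MeasurablePhaseGap.

Lemma measurable_phase_gap {d : measure_display} {T : measurableType d} {R : realType}
    (f g : T -> R) (b : R * R) :
  measurable_fun [set: T] f -> measurable_fun [set: T] g ->
  measurable_fun [set: T] (fun w => phase_gap (f w, g w) b).
Proof.
move=> mf mg; have mfb : measurable_fun [set: T] (fun w => f w + b.1).
  by apply: measurable_funD => //; exact: measurable_cst.
have mgb : measurable_fun [set: T] (fun w => g w + b.2).
  by apply: measurable_funD => //; exact: measurable_cst.
have [mu1 mu2] := measurable_cphase_pair mfb mgb.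
have [mx1 mx2] := measurable_cphase_pair mf mg.
by apply: measurable_cmod_pair; apply: measurable_funB.
Qed.

Lemma measurable_mean_phase_gap_le {d : measure_display} {T : measurableType d}
    {R : realType} (m : nat) (X : bool * 'I_m -> T -> R) (y : 'I_m -> R * R) (K : R) :
  (forall k, measurable_fun [set: T] (X k)) ->
  measurable [set w | m%:R^-1 * \sum_(i < m) phase_gap (cvec X w i) (y i) <= K].
Proof.
move=> mX; rewrite -[X in measurable X]setTI.
apply: (measurable_funM (measurable_cst _) _) measurableT _ (measurable_itv `]-oo, K]).
  by apply: measurable_sum => i; exact: measurable_phase_gap.
Qed.

Lemma measure_bigsetU_le {d : measure_display} {T : measurableType d} {R : realType}
    (mu : {measure set T -> \bar R}) {I : Type} (s : seq I) (P : pred I)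
    (F : I -> set T) :
  (forall i, P i -> measurable (F i)) ->
  (mu (\big[setU/set0]_(i <- s | P i) F i) <= \sum_(i <- s | P i) mu (F i))%E.
Proof.
move=> mF; elim: s => [|i s IH]; first by rewrite !big_nil measure0.
rewrite !big_cons; case: ifP => // Pi.
apply: le_trans (measureU2 _ _ _) _; [exact: mF | exact: bigsetU_measurable|].
exact: leeD.
Qed.

Lemma prode_le_EFin {R : realType} {I : Type} (s : seq I) (a : I -> \bar R)
    (b : I -> R) :
  (forall i, (0 <= a i <= (b i)%:E)%E) ->
  (\prod_(i <- s) a i <= (\prod_(i <- s) b i)%:E)%E.
Proof.
move=> ab; elim: s => [|i s IH]; first by rewrite !big_nil.
have /andP[a_ge0 a_le] := ab i.
rewrite !big_cons EFinM lee_pmul // prode_ge0 // => k _.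
by have /andP[] := ab k.
Qed.

Lemma normal_prob_itv_le {R : realType} (s r : R) : s != 0 -> 0 <= r ->
  (normal_prob 0 s `](- r)%R, r[ <= (2 * r * normal_peak s)%:E)%E.
Proof.
move=> s_neq0 r_ge0; rewrite /normal_prob.
apply: le_trans (@ge0_le_integral _ _ _ lebesgue_measure _ (measurable_itv _)
   (fun x => (normal_pdf 0 s x)%:E) (fun=> (normal_peak s)%:E) _ _ _ _) _.
- by move=> x _; rewrite lee_fin normal_pdf_ge0.
- apply/measurable_EFinP; apply: measurable_funTS; exact: measurable_normal_pdf.
- exact: measurable_cst.
- by move=> x _; rewrite lee_fin normal_pdf_ub.
rewrite integral_cst /= ?lebesgue_measure_itv /=; last exact: measurable_itv.
have := normal_peak_ge0 s; have [r_gt0|] := ltrP (- r) r.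
  by rewrite lte_fin r_gt0 -EFinD -EFinM lee_fin opprK; nra.
by rewrite lte_fin ltNge => -> /=; rewrite mule0 lee_fin; nra.
Qed.

Lemma ffact_le_expn (m j : nat) : (m ^_ j <= m ^ j)%N.
Proof.
rewrite ffact_prod -[in X in (_ <= X)%N](card_ord j) -prod_nat_const.
by apply: leq_prod => i _; exact: leq_subr.
Qed.

Lemma bin_mul_exprn_le_expR {R : realType} (m j : nat) : (0 < j)%N -> (j <= m)%N ->
  'C(m, j)%:R * (expR (-2) * j%:R / m%:R) ^+ j <= expR (- j%:R) :> R.
Proof.
move=> j_gt0 j_le_m; have m_gt0 : (0 < m)%N := leq_trans j_gt0 j_le_m.
have fact_gt0 : (0 : R) < j`!%:R by rewrite ltr0n fact_gt0.
have mj_gt0 : (0 : R) < m%:R ^+ j by rewrite exprn_gt0 ?ltr0n.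
have binom_le : 'C(m, j)%:R * j`!%:R <= m%:R ^+ j :> R.
  by rewrite -natrM bin_ffact -natrX ler_nat ffact_le_expn.
(* the power series of expR j contains the term j^j / j! *)
have pow_le : j%:R ^+ j / j`!%:R <= expR j%:R :> R.
  have := @expR_ge1Dxn R j%:R j.-1 (ler0n _ _); rewrite prednK //.
  have : 0 <= j%:R ^+ j / j`!%:R :> R by rewrite divr_ge0 ?exprn_ge0 ?ler0n.
  lra.
have -> : 'C(m, j)%:R * (expR (-2) * j%:R / m%:R) ^+ j =
    ('C(m, j)%:R * j`!%:R / m%:R ^+ j) * (j%:R ^+ j / j`!%:R) * expR (-2) ^+ j :> R.
  by rewrite !exprMn exprVn; field; rewrite !gt_eqF.
have -> : expR (- j%:R) = 1 * expR j%:R * expR (-2) ^+ j :> R.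
  by rewrite mul1r -expRM_natr -expRD; congr expR; ring.
rewrite ler_wpM2r ?exprn_ge0 ?expR_ge0 // ler_pM ?mulr_ge0 ?divr_ge0 ?exprn_ge0 ?ler0n //.
by rewrite ler_pdivrMr // mul1r.
Qed.

Lemma normal_peak_sqr {R : realType} (m : nat) : (0 < m)%N ->
  normal_peak (Num.sqrt (1 / (2 * m%:R))) ^+ 2 = m%:R / pi :> R.
Proof.
move=> m_gt0; have mR_gt0 : (0 : R) < m%:R by rewrite ltr0n.
rewrite /normal_peak exprVn sqr_sqrtr; last first.
  by rewrite mulrn_wge0 // mulr_ge0 ?pi_ge0 ?sqr_ge0.
rewrite sqr_sqrtr ?divr_ge0 ?mulr_ge0 ?ler0n //.
by have := @pi_gt0 R; move: (pi : R) => p p_gt0; field; rewrite !gt_eqF.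
Qed.

Section SmallCoordinates.
Context {d : measure_display} {T : measurableType d} {R : realType}.
Context {P : probability T R} {m : nat} {X : bool * 'I_m -> T -> R}.
Hypothesis X_CN : is_CN_scaled P X.

Definition coord_box (S : {set 'I_m}) (r : R) : set T :=
  \bigcap_(k in [set: bool * 'I_m])
    X k @^-1` (if k.2 \in S then [set` `](- r), r[] else [set: R]).

Lemma measurable_coord_box S r : measurable (coord_box S r).
Proof.
have [mX _] := X_CN; apply: fin_bigcap_measurable; first exact: finite_finset.
move=> k _; rewrite -[X in measurable X]setTI; apply: mX => //.
by case: ifP => _ //; exact: measurable_itv.
Qed.

Lemma coord_box_prob_le S r : (0 < m)%N -> 0 <= r ->
  (P (coord_box S r) <=
    (((2 * r * normal_peak (Num.sqrt (1 / (2 * m%:R)))) ^+ 2) ^+ #|S|)%:E)%E.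
Proof.
move: X_CN => [mX [indep law]] m_gt0 r_ge0.
have sigma_neq0 : Num.sqrt (1 / (2 * m%:R)) != 0 :> R.
  by rewrite gt_eqF // sqrtr_gt0 divr_gt0 // mulr_gt0 // ltr0n.
rewrite /coord_box indep; last by move=> k; case: ifP => _ //; exact: measurable_itv.
set q := 2 * r * _.
have -> : (q ^+ 2) ^+ #|S| = \prod_(k : bool * 'I_m) (if k.2 \in S then q else 1).
  rewrite -(pair_bigA _ (fun (b : bool) (i : 'I_m) => if i \in S then q else 1)) /=.
  by rewrite big_bool /= -big_mkcond /= prodr_const -exprMn.
apply: prode_le_EFin => k; rewrite measure_ge0 /=; case: ifP => _.
  by rewrite law ?normal_prob_itv_le //; exact: measurable_itv.
by rewrite preimage_setT probability_setT.
Qed.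

Lemma coord_boxes_prob_le c j : 0 <= c -> 2 * c <= expR (-2) -> (0 < j <= m)%N ->
  (P (\big[setU/set0]_(S : {set 'I_m} | #|S| == j)
        coord_box S (Num.sqrt (c * j%:R / m%:R ^+ 2))) <= (expR (- j%:R))%:E)%E.
Proof.
move=> c_ge0 c_le /andP[j_gt0 j_le_m]; have m_gt0 := leq_trans j_gt0 j_le_m.
have mR_gt0 : (0 : R) < m%:R by rewrite ltr0n.
set r := Num.sqrt _.
pose q := (2 * r * normal_peak (Num.sqrt (1 / (2 * m%:R)))) ^+ 2.
have q_le : q <= expR (-2) * j%:R / m%:R.
  rewrite /q !exprMn normal_peak_sqr // sqr_sqrtr ?divr_ge0 ?mulr_ge0 ?ler0n //.
  have := @pi_ge2 R; have := @pi_gt0 R; move: (pi : R) => p p_gt0 p_ge2.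
  have -> : 2 ^+ 2 * (c * j%:R / m%:R ^+ 2) * (m%:R / p) = 2 * c * j%:R / m%:R * (2 / p).
    by field; rewrite !gt_eqF.
  apply: (@le_trans _ _ (2 * c * j%:R / m%:R)).
    by rewrite ler_piMr ?divr_ge0 ?mulr_ge0 ?ler0n // ler_pdivrMr // mul1r.
  apply: ler_wpM2r; first by rewrite invr_ge0 ler0n.
  by apply: ler_wpM2r.
apply: le_trans (measure_bigsetU_le _ _ _ _ _) _ => [S _|].
  exact: measurable_coord_box.
apply: (@le_trans _ _ (\sum_(S : {set 'I_m} | #|S| == j) (q ^+ j)%:E)%E).
  by apply: lee_sum => S /eqP <-; exact: coord_box_prob_le _ _ m_gt0 (sqrtr_ge0 _).
rewrite sumEFin lee_fin sumr_const (_ : #|_| = 'C(m, j)); last first.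
  by rewrite -[m in 'C(m, _)]card_ord -card_draws; apply: eq_card => S; rewrite inE.
rewrite -[q ^+ j *+ _]mulr_natl.
apply: le_trans (bin_mul_exprn_le_expR _ _ j_gt0 j_le_m).
apply: ler_wpM2l; first exact: ler0n.
have q_ge0 : 0 <= q by exact: sqr_ge0.
by apply: lerXn2r; rewrite // nnegrE // divr_ge0 ?mulr_ge0 ?expR_ge0 ?ler0n.
Qed.

Definition small_coords (n : nat) (c : R) : set T :=
  \big[setU/set0]_(n <= j < m.+1) \big[setU/set0]_(S : {set 'I_m} | #|S| == j)
    coord_box S (Num.sqrt (c * j%:R / m%:R ^+ 2)).

Lemma measurable_small_coords n c : measurable (small_coords n c).
Proof.
by apply: bigsetU_measurable => j _; apply: bigsetU_measurable => S _;
  exact: measurable_coord_box.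
Qed.

Lemma small_coords_prob_le n c : 0 <= c -> 2 * c <= expR (-2) ->
  (0 < n <= m)%N -> (P (small_coords n c) <= (m%:R * expR (- n%:R))%:E)%E.
Proof.
move=> c_ge0 c_le /andP[n_gt0 n_le_m].
apply: le_trans (measure_bigsetU_le _ _ _ _ _) _ => [j _|].
  by apply: bigsetU_measurable => S _; exact: measurable_coord_box.
apply: (@le_trans _ _ (\sum_(n <= j < m.+1) (expR (- n%:R))%:E)%E).
  rewrite big_seq_cond [leRHS]big_seq_cond; apply: lee_sum => j.
  rewrite mem_index_iota ltnS andbT => /andP[n_le_j j_le_m].
  apply: le_trans (coord_boxes_prob_le _ j c_ge0 c_le _) _.
    by rewrite (leq_trans n_gt0 n_le_j).
  by rewrite lee_fin ler_expR lerN2 ler_nat.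
rewrite sumEFin sumr_const_nat lee_fin -[_ *+ _]mulr_natl.
apply: ler_wpM2r; first exact: expR_ge0.
by rewrite ler_nat subSn // ltn_subrL n_gt0 (leq_trans n_gt0).
Qed.

Lemma well_spread_of_not_small_coords n c w :
  ~ small_coords n c w -> well_spread n c (cvec X w).
Proof.
move=> not_small j /andP[n_le_j j_le_m]; rewrite ltnNge; apply/negP.
move=> /card_geqP[s [s_uniq s_size s_sub]]; apply: not_small.
rewrite /small_coords -bigcup_seq_cond; exists j.
  by rewrite /= andbT mem_index_iota n_le_j ltnS j_le_m.
rewrite -bigcup_seq_cond; exists [set i in s]%SET.
  by rewrite /= mem_index_enum cardsE -s_size; apply/eqP/card_uniqP.
move=> [b i] _ /=; case: ifPn => //; rewrite inE => /s_sub; rewrite inE => x_lt.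
rewrite /= in_itv /= -ltr_norml -sqrtr_sqr ltr_sqrt ?(le_lt_trans (sqr_ge0 _) x_lt) //.
apply: le_lt_trans x_lt; rewrite sqr_cmod /=.
by case: b; rewrite ?lerDl ?lerDr sqr_ge0.
Qed.

Lemma well_spread_whp {n : nat} {c : R} {A : set T} : 0 <= c -> 2 * c <= expR (-2) ->
  (0 < n <= m)%N -> measurable A ->
  [set w | well_spread n c (cvec X w)] `<=` A ->
  ((1 - m%:R * expR (- n%:R))%:E <= P A)%E.
Proof.
move=> c_ge0 c_le nm mA spread_A.
have mS := measurable_small_coords n c.
apply: (@le_trans _ _ (P (~` small_coords n c))).
  by rewrite probability_setC // EFinB leeB // small_coords_prob_le.
apply: le_measure; rewrite ?inE //; first exact: measurableC.
by move=> w /well_spread_of_not_small_coords /spread_A.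
Qed.

End SmallCoordinates.

Lemma ln_ge1 {R : realType} (x : R) : expR 1 <= x -> 1 <= ln x.
Proof.
move=> e_le_x; have x_gt0 : 0 < x := lt_le_trans (expR_gt0 1) e_le_x.
by rewrite -ler_expR lnK ?posrE.
Qed.

Theorem lemma2 (R : realType) :
  exists C : R, 0 < C /\
  exists N : nat, forall n m : nat, (N <= n)%N -> (n <= m)%N ->
  forall (d : measure_display) (T : measurableType d) (P : probability T R)
         (X : bool * 'I_m -> T -> R),
  is_CN_scaled P X ->
  forall y : 'I_m -> R * R,
  ((1 - m%:R * expR (- (n%:R / 6)))%:E <=
  P [set w | (m%:R^-1 *
               cnorm1 (fun i => czsub (cphase (czadd (cvec X w i) (y i)))
                                     (cphase (cvec X w i)))
             <= C * ln m%:R * Num.max (cnorm2 y) (n%:R / m%:R))%R])%E.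
Proof.
pose c : R := expR (-2) / 2.
have c_gt0 : 0 < c by rewrite divr_gt0 ?expR_gt0.
exists (3 + 2 / c); split; first by rewrite addr_gt0 ?divr_gt0.
exists (Num.Def.archi_bound (expR 1 : R)).+1 => n m Nn n_le_m d T P X X_CN y.
have n_gt0 : (0 < n)%N := leq_trans (ltn0Sn _) Nn.
have ln_m_ge1 : 1 <= ln (m%:R : R).
  apply/ln_ge1/ltW/(lt_le_trans (archi_boundP (expR_ge0 1))).
  by rewrite ler_nat (leq_trans (ltnW Nn)).
have c_le : 2 * c <= expR (-2) by rewrite /c mulrC divfK.
set target := [set w | _].
have m_target : measurable target by apply: measurable_mean_phase_gap_le; case: X_CN.
have spread_target : [set w | well_spread n c (cvec X w)] `<=` target.
  move=> w /(well_spread_phase_gap_le y c_gt0 n_gt0 n_le_m) /le_trans; apply.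
  rewrite ler_wpM2r ?le_max ?divr_ge0 ?ler0n ?orbT //.
  have k_gt0 : 0 < c^-1 by rewrite invr_gt0.
  by move: (c^-1) (ln _) k_gt0 ln_m_ge1 => k L; nra.
apply: le_trans (well_spread_whp X_CN (ltW c_gt0) c_le _ m_target spread_target).
  rewrite lee_fin lerD2l lerN2 ler_wpM2l ?ler0n // ler_expR lerN2.
  by rewrite ler_pdivrMr // ler_peMr ?ler0n // ler1n.
by rewrite n_gt0.
Qed.
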